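(* For every $\Delta \ge 1$ there is a local algorithm, using only a port numbering (no unique identifiers), that on every weakly $2$-coloured graph $\mathcal{G}=(V,E)$ without isolated nodes and of maximum degree at most $\Delta$ computes a spanning forest of $\mathcal{G}$ in which every component is a star with at least two nodes (i.e. a rooted tree of depth exactly $1$: a root with at least one child, all children being leaves), with each node knowing whether it is a root or a leaf and, for leaves, the port leading to its root.
   Context: Model: a graph $\mathcal{G}=(V,E)$ without isolated nodes is a distributed system; every node runs the same deterministic algorithm. Communication is synchronous: in each round every node receives messages from its neighbours, performs local computation, and sends messages to its neighbours. Each node knows its degree, its own input label (e.g. its colour), and the global degree bound $\Delta$. A local algorithm is one that terminates after $T$ rounds, where $T$ may depend on $\Delta$ but not on the number of nodes. A port numbering means each node has a fixed ordering (numbering $1,\dots,\deg(v)$) of its incident edges, known to it; nodes have no identifiers. A weak $2$-colouring assigns each node black or white so that every non-isolated node has at least one neighbour of the opposite colour; it is given as input. *)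

From mathcomp Require Import all_boot.
Set Implicit Arguments.
Unset Strict Implicit.
Unset Printing Implicit Defensive.

(* Node v has degree [deg v]; its ports are
   0, ..., deg v - 1.  [nbr v i] is the neighbour reached through port i of v,
   and [bport v i] is the port number at [nbr v i] of the same edge. *)
Definition port_graph (V : finType) (deg : V -> nat) (nbr : V -> nat -> V)
    (bport : V -> nat -> nat) : Prop :=
  [/\
      forall v i, i < deg v -> nbr v i <> v,
      forall v i j, i < deg v -> j < deg v -> nbr v i = nbr v j -> i = j &
      forall v i, i < deg v ->
        bport v i < deg (nbr v i) /\ nbr (nbr v i) (bport v i) = v].

(* weak 2-colouring (true = black, false = white): every node has a neighbour
   of the opposite colour *)
Definition weak2col (V : finType) (deg : V -> nat) (nbr : V -> nat -> V)
    (col : V -> bool) : Prop :=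
  forall v, exists2 i, i < deg v & col (nbr v i) != col v.

Inductive role := Root | Leaf of nat.  (* Leaf p : p = port leading to the root *)

Record LocalAlg := {
  St : Type;
  Msg : Type;
  init : nat -> bool -> St;        (* initial state from (degree, input colour) *)
  send : St -> nat -> Msg;         (* message sent on a given outgoing port *)
  step : St -> seq Msg -> St;      (* new state from messages received on ports 0..deg-1 *)
  rounds : nat;
  output : St -> role
}.

Fixpoint run (A : LocalAlg) (V : finType) (deg : V -> nat) (nbr : V -> nat -> V)
    (bport : V -> nat -> nat) (col : V -> bool) (t : nat) : V -> St A :=
  match t with
  | 0 => fun v => @init A (deg v) (col v)
  | t'.+1 => fun v =>
      let s := run A deg nbr bport col t' in
      @step A (s v) [seq @send A (s (nbr v j)) (bport v j) | j <- iota 0 (deg v)]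
  end.

(* The
   forest edges are the (leaf, port) edges. *)
Definition star_forest (V : finType) (deg : V -> nat) (nbr : V -> nat -> V)
    (bport : V -> nat -> nat) (o : V -> role) : Prop :=
  forall v, match o v with
            | Root => exists2 j, j < deg v & o (nbr v j) = Leaf (bport v j)
            | Leaf i => i < deg v /\ o (nbr v i) = Root
            end.

(* Every node points to its first neighbour of the opposite colour, its parent;
   since the colouring is weak, such a neighbour exists.  A black node becomes a
   root when one of its children is childless, and a white node becomes a root
   when one of its children is not a root.  A black non-root joins its white
   parent, which is a root because of it.  A white non-root joins one of its
   children if it has any (all of them are then black roots), and otherwise its
   black parent, which is a root because of this childless child. *)
From mathcomp Require Import all_boot.
Set Implicit Arguments.
Unset Strict Implicit.
Unset Printing Implicit Defensive.

Lemma run_succ (A : LocalAlg) (V : finType) deg nbr bport (col : V -> bool) t v :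
  run A deg nbr bport col t.+1 v =
  step (run A deg nbr bport col t v)
    [seq send (run A deg nbr bport col t (nbr v j)) (bport v j) | j <- iota 0 (deg v)].
Proof. by []. Qed.

Lemma has_iotaP (a : pred nat) n :
  reflect (exists2 j, j < n & a j) (has a (iota 0 n)).
Proof.
apply: (iffP hasP) => [[j]|[j]]; rewrite ?mem_iota => lt_j aj; exists j => //.
by rewrite mem_iota.
Qed.

Lemma find_iota (a : pred nat) n :
  has a (iota 0 n) -> find a (iota 0 n) < n /\ a (find a (iota 0 n)).
Proof.
move=> has_a; split; first by rewrite -[n in _ < n](size_iota 0) -has_find.
by have := nth_find 0 has_a; rewrite nth_iota // -[n in _ < n](size_iota 0) -has_find.
Qed.

Lemma bportK (V : finType) deg nbr bport (v : V) i :
  port_graph deg nbr bport -> i < deg v -> bport (nbr v i) (bport v i) = i.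
Proof.
case=> _ inj_nbr back lt_i; have [lt_b nbr_b] := back _ _ lt_i.
have [lt_bb nbr_bb] := back _ _ lt_b; rewrite nbr_b in lt_bb nbr_bb.
exact: inj_nbr lt_bb lt_i nbr_bb.
Qed.

Lemma eq_star_forest (V : finType) deg nbr bport (o o' : V -> role) :
  o =1 o' -> star_forest deg nbr bport o -> star_forest deg nbr bport o'.
Proof.
move=> eq_o forest v; move: (forest v); rewrite !eq_o.
case: (o' v) => [[j lt_j leaf_j] | i [lt_i root_i]].
  by exists j; rewrite // -eq_o.
by rewrite -eq_o.
Qed.

Section StarRoles.

Variables (V : finType) (deg : V -> nat) (nbr : V -> nat -> V).
Variables (bport : V -> nat -> nat) (col : V -> bool).
Hypothesis graph : port_graph deg nbr bport.
Hypothesis colouring : weak2col deg nbr col.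

Definition parent_port v := find (fun j => col (nbr v j) != col v) (iota 0 (deg v)).

Definition child_at v j := parent_port (nbr v j) == bport v j.

Definition has_child v := has (child_at v) (iota 0 (deg v)).

Definition child_port v := find (child_at v) (iota 0 (deg v)).

Definition black_root v :=
  has (fun j => child_at v j && ~~ has_child (nbr v j)) (iota 0 (deg v)).

Definition white_root v :=
  has (fun j => child_at v j && ~~ black_root (nbr v j)) (iota 0 (deg v)).

Definition is_root v := if col v then black_root v else white_root v.

Definition leaf_port v :=
  if ~~ col v && has_child v then child_port v else parent_port v.

Definition star_role v := if is_root v then Root else Leaf (leaf_port v).

Lemma parent_portP v :
  parent_port v < deg v /\ col (nbr v (parent_port v)) = ~~ col v.
Proof.
have [lt_p col_p] : parent_port v < deg v /\ col (nbr v (parent_port v)) != col v.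
  by apply: find_iota; apply/has_iotaP; apply: colouring.
by split=> //; move: col_p; case: (col _); case: (col v).
Qed.

Lemma child_at_col v j : j < deg v -> child_at v j -> col (nbr v j) = ~~ col v.
Proof.
move=> lt_j /eqP parent_j; have [_ col_p] := parent_portP (nbr v j).
case: (graph) => _ _ back; have [_ nbr_b] := back _ _ lt_j.
by move: col_p; rewrite parent_j nbr_b => ->; rewrite negbK.
Qed.

Lemma parent_has_child (P : pred V) v : P v ->
  let w := nbr v (parent_port v) in
  has (fun k => child_at w k && P (nbr w k)) (iota 0 (deg w)).
Proof.
move=> Pv /=; have [lt_p _] := parent_portP v.
case: (graph) => _ _ back; have [lt_b nbr_b] := back _ _ lt_p.
apply/has_iotaP; exists (bport v (parent_port v)) => //.
by rewrite /child_at nbr_b (bportK graph lt_p) eqxx.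
Qed.

Lemma root_has_leaf v : is_root v ->
  exists2 j, j < deg v & star_role (nbr v j) = Leaf (bport v j).
Proof.
rewrite /is_root /star_role /leaf_port.
case col_v: (col v) => /has_iotaP[j lt_j /andP[child_j nroot_j]]; exists j => //;
  have := child_at_col lt_j child_j; rewrite col_v /is_root => -> /=;
  move/eqP: (child_j) => ->.
  have nroot_u : ~~ white_root (nbr v j).
    apply: contra nroot_j => /has_iotaP[k lt_k /andP[child_k _]].
    by apply/has_iotaP; exists k.
  by rewrite (negbTE nroot_u) (negbTE nroot_j).
by rewrite (negbTE nroot_j).
Qed.

Lemma leaf_port_root v : ~~ is_root v ->
  leaf_port v < deg v /\ is_root (nbr v (leaf_port v)).
Proof.
rewrite /is_root /leaf_port; have [lt_p col_p] := parent_portP v.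
case col_v: (col v) => /= nroot.
  split=> //; rewrite /is_root col_p col_v /=.
  exact: (parent_has_child (P := fun u => ~~ black_root u)).
case child_v: (has_child v); last first.
  split=> //; rewrite /is_root col_p col_v /=.
  by apply: (parent_has_child (P := fun u => ~~ has_child u)); rewrite child_v.
have [lt_q child_q] := find_iota child_v; split=> //.
rewrite /is_root (child_at_col lt_q child_q) col_v /=.
apply: contraR nroot => nroot_q; apply/has_iotaP.
by exists (child_port v); rewrite // child_q.
Qed.

Lemma star_role_forest : star_forest deg nbr bport star_role.
Proof.
move=> v; rewrite {1}/star_role; case: ifP => [root_v | /negbT nroot_v].
  exact: root_has_leaf.
have [lt_l root_l] := leaf_port_root nroot_v.
by split=> //; rewrite /star_role root_l.
Qed.

End StarRoles.

Record node_state := NodeState {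
  st_colour : bool; st_parent : nat; st_child : nat;
  st_has_child : bool; st_root : bool }.

Record message := Message {
  msg_colour : bool; msg_to_parent : bool; msg_has_child : bool; msg_root : bool }.

(* Every field is recomputed in each round from the previous round's messages,
   so it is meaningful only from some round on: [st_parent] from round 1,
   [st_child] and [st_has_child] from round 2, and [st_root] from round 3 on
   black and round 4 on white nodes. *)
Definition star_alg : LocalAlg := {|
  St := node_state;
  Msg := message;
  init := fun _ c => NodeState c 0 0 false false;
  send := fun s i =>
     Message (st_colour s) (st_parent s == i) (st_has_child s) (st_root s);
  step := fun s ms => NodeState (st_colour s)
     (find (fun m => msg_colour m != st_colour s) ms)
     (find msg_to_parent ms)
     (has msg_to_parent ms)
     (if st_colour s then has (fun m => msg_to_parent m && ~~ msg_has_child m) ms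
      else has (fun m => msg_to_parent m && ~~ msg_root m) ms);
  rounds := 4;
  output := fun s => if st_root s then Root
                     else if ~~ st_colour s && st_has_child s then Leaf (st_child s)
                     else Leaf (st_parent s)
|}.

Section StarAlgRun.

Variables (V : finType) (deg : V -> nat) (nbr : V -> nat -> V).
Variables (bport : V -> nat -> nat) (col : V -> bool).
Hypothesis graph : port_graph deg nbr bport.
Hypothesis colouring : weak2col deg nbr col.

Local Notation state := (run star_alg deg nbr bport col).

Lemma st_colour_run t v : st_colour (state t v) = col v.
Proof. by elim: t v => [|t IH] v //; rewrite run_succ /= IH. Qed.

Lemma st_parent_run t v : st_parent (state t.+1 v) = parent_port deg nbr col v.
Proof.
rewrite run_succ; cbn -[run]; rewrite find_map.
by apply: eq_find => j; cbn -[run]; rewrite !st_colour_run.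
Qed.

Lemma st_has_child_run t v :
  st_has_child (state t.+2 v) = has_child deg nbr bport col v.
Proof.
rewrite run_succ; cbn -[run]; rewrite has_map.
by apply: eq_has => j; cbn -[run]; rewrite st_parent_run.
Qed.

Lemma st_child_run t v : st_child (state t.+2 v) = child_port deg nbr bport col v.
Proof.
rewrite run_succ; cbn -[run]; rewrite find_map.
by apply: eq_find => j; cbn -[run]; rewrite st_parent_run.
Qed.

Lemma st_root_run_black t v : col v ->
  st_root (state t.+3 v) = black_root deg nbr bport col v.
Proof.
move=> col_v; rewrite run_succ; cbn -[run]; rewrite st_colour_run col_v has_map.
by apply: eq_has => j; cbn -[run]; rewrite st_parent_run st_has_child_run.
Qed.

Lemma st_root_run_white t v : ~~ col v ->
  st_root (state t.+4 v) = white_root deg nbr bport col v.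
Proof.
move=> /negbTE col_v; rewrite run_succ; cbn -[run]; rewrite st_colour_run col_v has_map.
apply: eq_in_has => j; rewrite mem_iota add0n => /andP[_ lt_j]; cbn -[run].
rewrite st_parent_run; apply: andb_id2l => child_j.
by rewrite st_root_run_black // (child_at_col graph colouring lt_j child_j) col_v.
Qed.

Lemma star_alg_output v :
  output (state (rounds star_alg) v) = star_role deg nbr bport col v.
Proof.
rewrite /star_role /is_root /leaf_port; cbn -[run]; rewrite st_colour_run.
case col_v: (col v).
  by rewrite st_root_run_black // st_parent_run.
rewrite st_root_run_white ?col_v // st_has_child_run st_child_run st_parent_run /=.
by case: has_child.
Qed.

End StarAlgRun.

Theorem mainTheorem4 (Delta : nat) : 1 <= Delta ->
  exists A : LocalAlg,
    forall (V : finType) (deg : V -> nat) (nbr : V -> nat -> V)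
           (bport : V -> nat -> nat) (col : V -> bool),
      port_graph deg nbr bport ->
      (forall v, 1 <= deg v) ->
      (forall v, deg v <= Delta) ->
      weak2col deg nbr col ->
      star_forest deg nbr bport
        (fun v => @output A (run A deg nbr bport col (@rounds A) v)).
Proof.
move=> _; exists star_alg => V deg nbr bport col graph _ _ colouring.
apply: (eq_star_forest (o := star_role deg nbr bport col)).
  by move=> v; rewrite star_alg_output.
exact: star_role_forest.
Qed.
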